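(* Let $V$ be a finite-dimensional real vector space with a non-degenerate inner product of signature $(p,q)$, $p,q\ge 1$, $p+q\ge 3$; let $Q(v)=(v,v)$, $\mathcal{N}=\{v:Q(v)=0\}$, and $\mathcal{I}=Q\cdot\mathbb{R}[V,\mathbb{R}]$. Let $W$ be a finite-dimensional real vector space of dimension $w$ and let $x_1,\dots,x_r\in\mathbb{R}[V,W]$ with $r\le w$. The following are equivalent: \begin{enumerate} \item the vectors $x_1(v),\dots,x_r(v)$ are linearly dependent for all $v\in\mathcal{N}$; \item $I(x_1,\dots,x_r)\subset\mathcal{I}$; \item there exist $c_1,\dots,c_r\in\mathbb{R}[V,\mathbb{R}]$, with $c_i\notin\mathcal{I}$ for at least one $i$, such that $c_1x_1+\dots+c_rx_r\in\mathcal{I}\,\mathbb{R}[V,W]$, i.e. $c_1x_1+\dots+c_rx_r=Q\cdot y$ for some $y\in\mathbb{R}[V,W]$. \end{enumerate}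
   Context: $\mathbb{R}[V,\mathbb{R}]$ is the ring of real polynomial functions on $V$ and $\mathbb{R}[V,W]$ the $\mathbb{R}[V,\mathbb{R}]$-module of polynomial maps $V\to W$. For a basis of $W$, let $\mathbf{X}$ be the $w\times r$ matrix over $\mathbb{R}[V,\mathbb{R}]$ whose $i$-th column is the coordinate vector of $x_i$; $I(x_1,\dots,x_r)$ is the ideal generated by all $r\times r$ minors of $\mathbf{X}$ (independent of the basis). *)

From HB Require Import structures.
From mathcomp Require Import all_boot all_order all_algebra.
From mathcomp Require Import reals.
From mathcomp Require Import mpoly.
Set Implicit Arguments. Unset Strict Implicit. Unset Printing Implicit Defensive.
Import Order.TTheory GRing.Theory Num.Theory.
Local Open Scope ring_scope.

(* V = R^n (coordinates); a symmetric matrix A represents the inner product. *)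

(* Nondegenerate symmetric form of signature (p,q): Sylvester normal form. *)
Definition has_signature (R : realType) (n : nat) (A : 'M[R]_n) (p q : nat) : Prop :=
  A^T = A /\ (p + q = n)%N /\
  exists P : 'M[R]_n, P \in unitmx /\
    P^T *m A *m P = diag_mx (\row_(i < n) (if (i < p)%N then 1 else -1)).

Definition Qpoly (R : realType) (n : nat) (A : 'M[R]_n) : {mpoly R[n]} :=
  \sum_(i < n) \sum_(j < n) (A i j) *: ('X_i * 'X_j).

Definition in_Qideal (R : realType) (n : nat) (Q : {mpoly R[n]}) (f : {mpoly R[n]}) : Prop :=
  exists g : {mpoly R[n]}, f = Q * g.

(* The ideal I(x_1,...,x_r) generated by all r x r minors of the w x r matrix X. *)
Definition in_minor_ideal (R : realType) (n w r : nat)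
  (X : 'M[{mpoly R[n]}]_(w, r)) (f : {mpoly R[n]}) : Prop :=
  exists a : {ffun 'I_r -> 'I_w} -> {mpoly R[n]},
    f = \sum_(s : {ffun 'I_r -> 'I_w} | injectiveb s) a s * \det (rowsub s X).

From HB Require Import structures.
From mathcomp Require Import all_boot all_order all_algebra.
From mathcomp Require Import reals.
From mathcomp Require Import mpoly.
From mathcomp Require Import ring lra.
From mathcomp Require Import perm.
From Stdlib Require Import Classical.
Set Implicit Arguments. Unset Strict Implicit. Unset Printing Implicit Defensive.
Import Order.TTheory GRing.Theory Num.Theory.
Local Open Scope ring_scope.

(* After a linear change of coordinates, Q (or -Q) becomes x_0^2 - T with T a
   form in the remaining variables taking both signs, because p, q >= 1 and
   p + q >= 3.  Modulo Q every polynomial is h0 + x_0 h1 with h0, h1 free of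
   x_0.  Where T > 0 the null cone contains the points x_0 = +-sqrt T, so a
   polynomial vanishing on it has h0 = h1 = 0 on an open box, hence everywhere:
   Q generates the ideal of the null cone.  Where T < 0, h0^2 - T h1^2 = 0
   forces h0 = h1 = 0, which makes (Q) prime.  Given these two facts,
   (1) <-> (2) says that the maximal minors vanish on the null cone,
   (3) -> (2) follows from adj(M) M = det(M) and primality, and (2) -> (3)
   comes from the Laplace expansion of a bordered minor around a largest minor
   outside (Q). *)

Section MpolyEvaluation.
Variable R : realType.

Lemma meval_sum n (I : Type) (r : seq I) (P : pred I) (F : I -> {mpoly R[n]}) v :
  (\sum_(i <- r | P i) F i).@[v] = \sum_(i <- r | P i) (F i).@[v].
Proof. exact: raddf_sum. Qed.

Lemma mevalXn n (p : {mpoly R[n]}) k v : (p ^+ k).@[v] = p.@[v] ^+ k.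
Proof. exact: rmorphXn. Qed.

Lemma poly_eq0_on_itv (p : {poly R}) (a b : R) : a < b ->
  (forall t, a < t < b -> p.[t] = 0) -> p = 0.
Proof.
move=> ab H; apply/eqP; apply/negPn/negP => p0.
pose pt (k : nat) : R := a + (b - a) / (k.+2)%:R.
have ptin k : a < pt k < b.
  have e0 : (0 : R) < (k.+2)%:R^-1 by rewrite invr_gt0 ltr0n.
  have e1 : (k.+2)%:R^-1 < (1 : R) by rewrite invf_lt1 ?ltr0n // ltr1n.
  rewrite /pt; set e := _^-1 in e0 e1 *; apply/andP; split; nra.
have pt_inj : injective pt.
  have ba : b - a != 0 by rewrite subr_eq0 (gt_eqF ab).
  move=> k l; rewrite /pt => /addrI /(mulfI ba) /invr_inj /eqP.
  by rewrite eqr_nat !eqSS => /eqP.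
suff : (size (map pt (iota 0 (size p))) < size p)%N.
  by rewrite size_map size_iota ltnn.
apply: max_poly_roots p0 _ _.
  by apply/allP => x /mapP [k _ ->]; rewrite /root H.
by rewrite map_inj_uniq // iota_uniq.
Qed.

Definition mtrunc n (m : 'X_{1..n.+1}) : 'X_{1..n} :=
  [multinom m (widen_ord (leqnSn n) i) | i < n].

Lemma coef_muni n (p : {mpoly R[n.+1]}) k m' :
  ((muni p)`_k)@_m' =
  \sum_(m <- msupp p | (m ord_max == k) && (mtrunc m == m')) p@_m.
Proof.
rewrite muniE coef_sum raddf_sum /= [RHS]big_mkcond /=; apply: eq_bigr => m _.
rewrite -mul_polyC coefCM coefXn eq_sym.
case: (m ord_max == k); rewrite /= ?mulr0 ?mulr1 ?mcoeff0 //.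
by rewrite mcoeffZ mcoeffX; case: (_ == m'); rewrite ?mulr1 ?mulr0.
Qed.

Lemma muni_eq0 n (p : {mpoly R[n.+1]}) : (muni p == 0) = (p == 0).
Proof.
apply/eqP/eqP => [p0|->]; last exact: raddf0.
apply/mpolyP => m0; rewrite mcoeff0.
have := coef_muni p (m0 ord_max) (mtrunc m0); rewrite p0 coef0 mcoeff0.
rewrite (eq_bigl (pred1 m0)); last first.
  move=> m; apply/andP/eqP => [[/eqP e1 /eqP e2]|-> //].
  apply/mnmP => i; case: (unliftP ord_max i) => [j ->|->] //.
  have := congr1 (fun t : 'X_{1..n} => t j) e2; rewrite /mtrunc /= !mnmE.
  have -> // : widen_ord (leqnSn n) j = lift ord_max j.
  by apply: val_inj; rewrite /= /bump leqNgt ltn_ord.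
case: (boolP (m0 \in msupp p)) => [hm|hm]; last by rewrite memN_msupp_eq0.
by rewrite -big_filter filter_pred1_uniq ?msupp_uniq // big_seq1 => ->.
Qed.

Lemma meval_muni n (p : {mpoly R[n.+1]}) (v : 'I_n.+1 -> R) :
  p.@[v] = (map_poly (meval (v \o widen_ord (leqnSn n))) (muni p)).[v ord_max].
Proof.
rewrite mevalE muniE rmorph_sum horner_sum; apply: eq_bigr => m _.
rewrite -mul_polyC rmorphM /= map_polyC map_polyXn hornerCM hornerXn -mul_mpolyC.
rewrite -[X in _ = X * _]/((_ * _).@[_]) mevalM mevalC mevalX big_ord_recr /= mulrA.
by congr (_ * _ * _); apply: eq_bigr => i _; rewrite mnmE.
Qed.

Definition in_box n (a b v : 'I_n -> R) := forall i, a i < v i < b i.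

Lemma mpoly_eq0_on_box n (f : {mpoly R[n]}) (a b : 'I_n -> R) :
  (forall i, a i < b i) -> (forall v, in_box a b v -> f.@[v] = 0) -> f = 0.
Proof.
elim: n f a b => [|n IH] f a b ab H.
  have h0 : in_box a b (fun _ => 0) by case.
  by move: (H _ h0); rewrite (nvar0_mpolyC f) mevalC => ->.
apply/eqP; rewrite -muni_eq0; apply/eqP/polyP => k; rewrite coef0.
pose a' := a \o widen_ord (leqnSn n); pose b' := b \o widen_ord (leqnSn n).
apply: (IH _ a' b') => [i|v' hv']; first exact: ab.
pose ext (t : R) : 'I_n.+1 -> R := fun i => oapp v' t (insub (val i)).
have ext_widen t i : ext t (widen_ord (leqnSn n) i) = v' i.
  by rewrite /ext insubT /= ?ltn_ord // => ?; congr (v' _); exact: val_inj.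
have ext_max t : ext t ord_max = t by rewrite /ext insubF //= ltnn.
have : map_poly (meval v') (muni f) = 0.
  apply: (poly_eq0_on_itv (ab ord_max)) => t ht.
  have -> : map_poly (meval v') (muni f) =
            map_poly (meval (ext t \o widen_ord (leqnSn n))) (muni f).
    by apply: eq_map_poly => x; apply: meval_eq => i; rewrite /= ext_widen.
  rewrite -[X in _.[X]](ext_max t) -meval_muni; apply: H => i.
  case: (unliftP ord_max i) => [j ->|->]; last by rewrite ext_max.
  have -> : lift ord_max j = widen_ord (leqnSn n) j.
    by apply: val_inj; rewrite /= /bump leqNgt ltn_ord.
  by rewrite ext_widen; exact: hv'.
by move/(congr1 (fun u : {poly R} => u`_k)); rewrite coef_map coef0.
Qed.

Lemma meval_inj n (f g : {mpoly R[n]}) : (forall v, f.@[v] = g.@[v]) -> f = g.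
Proof.
move=> H; apply/eqP; rewrite -subr_eq0; apply/eqP.
apply: (@mpoly_eq0_on_box n _ (fun _ => 0) (fun _ => 1)) => [i|v _].
  exact: ltr01.
by rewrite mevalB H subrr.
Qed.

End MpolyEvaluation.

Section PrincipalIdeals.
Variables (R : realType) (n : nat).
Implicit Types (Q f a b : {mpoly R[n]}).

Lemma in_Qideal0 Q : in_Qideal Q 0.
Proof. by exists 0; rewrite mulr0. Qed.

Lemma in_QidealD Q a b : in_Qideal Q a -> in_Qideal Q b -> in_Qideal Q (a + b).
Proof. by move=> [g ->] [h ->]; exists (g + h); rewrite mulrDr. Qed.

Lemma in_QidealMl Q a b : in_Qideal Q b -> in_Qideal Q (a * b).
Proof. by move=> [h ->]; exists (a * h); rewrite mulrCA. Qed.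

Lemma in_QidealN Q f : in_Qideal (- Q) f <-> in_Qideal Q f.
Proof. by split=> [[g ->]|[g ->]]; exists (- g); rewrite ?mulrNN // mulNr mulrN. Qed.

Lemma not_in_Qideal1 Q v : Q.@[v] = 0 -> ~ in_Qideal Q 1.
Proof.
move=> Qv [g /(congr1 (meval v))].
by rewrite meval1 mevalM Qv mul0r => /eqP; rewrite oner_eq0.
Qed.

Definition real_radical Q :=
  forall f, (forall v, Q.@[v] = 0 -> f.@[v] = 0) -> in_Qideal Q f.

Definition principal_prime Q := ~ in_Qideal Q 1 /\
  forall a b, in_Qideal Q (a * b) -> ~ in_Qideal Q a -> in_Qideal Q b.

Lemma real_radicalN Q : real_radical (- Q) -> real_radical Q.
Proof.
move=> rr f Hf; apply/in_QidealN/rr => v.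
by rewrite mevalN => /eqP; rewrite oppr_eq0 => /eqP /Hf.
Qed.

Lemma principal_primeN Q : principal_prime (- Q) -> principal_prime Q.
Proof.
move=> [Q1 pr]; split=> [/in_QidealN //|a b /in_QidealN ab na].
by apply/in_QidealN/(pr _ _ ab) => /in_QidealN.
Qed.

End PrincipalIdeals.

Section LinearChange.
Variables (R : realType) (n : nat).
Implicit Types (P M : 'M[R]_n) (v : 'I_n -> R) (Q f : {mpoly R[n]}).

Definition lin P : n.-tuple {mpoly R[n]} := [tuple \sum_j P i j *: 'X_j | i < n].

Definition mxv P v : 'I_n -> R := fun i => (P *m \col_j v j) i 0.

Lemma col_mxv P v : \col_i mxv P v i = P *m \col_i v i.
Proof. by apply/matrixP => i a; rewrite [a]ord1 mxE. Qed.

Lemma meval_comp_lin P f v : (f \mPo lin P).@[v] = f.@[mxv P v].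
Proof.
rewrite comp_mpoly_meval; apply: meval_eq => i.
rewrite tnth_mktuple meval_sum /mxv mxE; apply: eq_bigr => j _.
by rewrite mevalZ mevalXU mxE.
Qed.

Lemma mxvK P v : P \in unitmx -> mxv P (mxv (invmx P) v) =1 v.
Proof. by move=> Pu i; rewrite /mxv col_mxv mulmxA mulmxV // mul1mx mxE. Qed.

Lemma in_Qideal_comp_lin P Q f : P \in unitmx ->
  in_Qideal (Q \mPo lin P) (f \mPo lin P) <-> in_Qideal Q f.
Proof.
move=> Pu; split=> [[g e]|[g ->]]; last by exists (g \mPo lin P); rewrite rmorphM.
exists (g \mPo lin (invmx P)); apply: meval_inj => v.
rewrite -(meval_eq _ (mxvK v Pu)) -meval_comp_lin e !mevalM meval_comp_lin.
by rewrite (meval_eq _ (mxvK v Pu)) meval_comp_lin.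
Qed.

Lemma real_radical_comp_lin P Q : P \in unitmx ->
  real_radical (Q \mPo lin P) -> real_radical Q.
Proof.
move=> Pu rr f Hf; apply/(in_Qideal_comp_lin _ _ Pu)/rr => v.
by rewrite !meval_comp_lin; exact: Hf.
Qed.

Lemma principal_prime_comp_lin P Q : P \in unitmx ->
  principal_prime (Q \mPo lin P) -> principal_prime Q.
Proof.
move=> Pu [Q1 pr]; split=> [|a b ab na].
  by move/(in_Qideal_comp_lin _ _ Pu); rewrite rmorph1.
apply/(in_Qideal_comp_lin _ _ Pu)/(pr (a \mPo lin P)).
  by rewrite -rmorphM; apply/in_Qideal_comp_lin.
by move/(in_Qideal_comp_lin _ _ Pu).
Qed.

Lemma meval_Qpoly M v : (Qpoly M).@[v] = \sum_i \sum_j M i j * (v i * v j).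
Proof.
rewrite meval_sum; apply: eq_bigr => i _; rewrite meval_sum; apply: eq_bigr => j _.
by rewrite mevalZ mevalM !mevalXU.
Qed.

Lemma meval_Qpoly_mx M v :
  (Qpoly M).@[v] = ((\col_i v i)^T *m M *m \col_i v i) 0 0.
Proof.
rewrite meval_Qpoly mxE exchange_big /=; apply: eq_bigr => j _.
rewrite !mxE big_distrl /=; apply: eq_bigr => i _.
by rewrite !mxE; ring.
Qed.

Lemma Qpoly_comp_lin P M : Qpoly M \mPo lin P = Qpoly (P^T *m M *m P).
Proof.
apply: meval_inj => v.
by rewrite meval_comp_lin !meval_Qpoly_mx col_mxv trmx_mul !mulmxA.
Qed.

Lemma QpolyN M : Qpoly (- M) = - Qpoly M.
Proof.
rewrite /Qpoly -sumrN; apply: eq_bigr => i _; rewrite -sumrN; apply: eq_bigr => j _.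
by rewrite mxE scaleNr.
Qed.

End LinearChange.

Section DiagonalForm.
Variables (R : realType) (n : nat) (s : 'I_n -> R) (i0 j k : 'I_n).
Hypothesis s_sign : forall i, s i = 1 \/ s i = -1.
Hypotheses (s_i0 : s i0 = 1) (s_j : s j = 1) (s_k : s k = -1) (j_neq_i0 : j != i0).

Let k_neq_i0 : k != i0.
Proof. by apply/eqP => ki0; move: s_k; rewrite ki0 s_i0; lra. Qed.

Definition set_i0 (v : 'I_n -> R) (x : R) : 'I_n -> R :=
  fun i => if i == i0 then x else v i.

Definition free_i0 (h : {mpoly R[n]}) := forall v x, h.@[set_i0 v x] = h.@[v].

Definition Dtail : {mpoly R[n]} := - \sum_(i | i != i0) s i *: 'X_i ^+ 2.

Definition Dform : {mpoly R[n]} := 'X_i0 ^+ 2 - Dtail.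

Lemma meval_Dtail v : Dtail.@[v] = - \sum_(i | i != i0) s i * v i ^+ 2.
Proof.
rewrite mevalN meval_sum; congr (- _); apply: eq_bigr => i _.
by rewrite mevalZ mevalXn mevalXU.
Qed.

Lemma meval_Dform v : Dform.@[v] = v i0 ^+ 2 - Dtail.@[v].
Proof. by rewrite mevalB mevalXn mevalXU. Qed.

Lemma set_i0_id v x : set_i0 v x i0 = x.
Proof. by rewrite /set_i0 eqxx. Qed.

Lemma free_i0_Dtail : free_i0 Dtail.
Proof.
move=> v x; rewrite !meval_Dtail; congr (- _).
by apply: eq_bigr => i /negbTE hi; rewrite /set_i0 hi.
Qed.

Lemma free_i0D f g : free_i0 f -> free_i0 g -> free_i0 (f + g).
Proof. by move=> hf hg v x; rewrite !mevalD hf hg. Qed.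

Lemma free_i0M f g : free_i0 f -> free_i0 g -> free_i0 (f * g).
Proof. by move=> hf hg v x; rewrite !mevalM hf hg. Qed.

Lemma free_i0Z c f : free_i0 f -> free_i0 (c *: f).
Proof. by move=> hf v x; rewrite !mevalZ hf. Qed.

Lemma free_i0C c : free_i0 c%:MP.
Proof. by move=> v x; rewrite !mevalC. Qed.

Lemma free_i0X i : i != i0 -> free_i0 'X_i.
Proof. by move=> /negbTE hi v x; rewrite !mevalXU /set_i0 hi. Qed.

Definition Ddecomp f := exists g h0 h1,
  [/\ free_i0 h0, free_i0 h1 & f = Dform * g + h0 + 'X_i0 * h1].

Lemma DdecompC c : Ddecomp c%:MP.
Proof.
exists 0, c%:MP, 0; split; try exact: free_i0C.
by rewrite !mulr0 add0r addr0.
Qed.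

Lemma DdecompD f g : Ddecomp f -> Ddecomp g -> Ddecomp (f + g).
Proof.
case=> g1 [a0] [a1] [ha0 ha1 ->]; case=> g2 [b0] [b1] [hb0 hb1 ->].
by exists (g1 + g2), (a0 + b0), (a1 + b1); split; try apply: free_i0D => //; ring.
Qed.

Lemma DdecompZ c f : Ddecomp f -> Ddecomp (c *: f).
Proof.
case=> g [a0] [a1] [ha0 ha1 ->].
exists (c *: g), (c *: a0), (c *: a1); split; try exact: free_i0Z.
by rewrite !scalerDr scalerAr [c *: ('X_i0 * _)]scalerAr.
Qed.

Lemma DdecompXM i f : Ddecomp f -> Ddecomp ('X_i * f).
Proof.
case=> g [h0] [h1] [fh0 fh1 ->].
have [->|ii0] := eqVneq i i0.
  exists ('X_i0 * g + h1), (Dtail * h1), h0; split=> //.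
    exact: free_i0M free_i0_Dtail fh1.
  by rewrite /Dform; ring.
exists ('X_i * g), ('X_i * h0), ('X_i * h1).
by split; try apply: free_i0M (free_i0X ii0) _ => //; ring.
Qed.

Lemma Ddecomp_all f : Ddecomp f.
Proof.
elim/mpolyind: f => [|c m p _ _ hp]; first by rewrite -mpolyC0; exact: DdecompC.
apply: DdecompD hp; apply: DdecompZ.
rewrite mpolyXE_id; elim/big_rec: _ => [|i x _ hx].
  by rewrite -mpolyC1; exact: DdecompC.
by elim: (m i) => [|e IH]; rewrite ?expr0 ?mul1r // exprS -mulrA; apply: DdecompXM.
Qed.

(* On the box around the c-th axis, x_c^2 > n exceeds the sum of the other
   squares, each of which is below 1. *)
Definition box_lo (c : 'I_n) : 'I_n -> R := fun i => if i == c then n%:R else 0.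
Definition box_hi (c : 'I_n) : 'I_n -> R := fun i => if i == c then n%:R + 1 else 1.

Lemma box_lo_hi c i : box_lo c i < box_hi c i.
Proof. by rewrite /box_lo /box_hi; case: (i == c); rewrite ?ltrDl ?ltr01. Qed.

Lemma sign_Dtail_on_box c v : c != i0 -> in_box (box_lo c) (box_hi c) v ->
  0 < s c * - Dtail.@[v].
Proof.
move=> ci0 hv; rewrite meval_Dtail opprK (bigD1 c) //=.
set rest := \sum_(i | _) _.
have n1 : (1 : R) <= n%:R by rewrite ler1n (leq_ltn_trans (leq0n _) (ltn_ord c)).
have hc : n%:R < v c by have := hv c; rewrite /box_lo /box_hi eqxx => /andP[].
have : `|rest| <= n%:R.
  apply: le_trans (ler_norm_sum _ _ _) _.
  rewrite big_mkcond /= -[n in n%:R]card_ord -sumr_const.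
  apply: ler_sum => i _; case: ifP => [/andP[_ hic]|_]; last exact: ler01.
  have := hv i; rewrite /box_lo /box_hi (negbTE hic) => /andP[h0 h1].
  rewrite normrM; case: (s_sign i) => ->; rewrite ?normrN normr1 mul1r ger0_norm;
    try (by rewrite exprn_ge0 // ltW); nra.
rewrite ler_norml => /andP[hr1 hr2].
by case: (s_sign c) => ->; nra.
Qed.

(* Solving for X_i0 = +-sqrt(Dtail) on a box where Dtail > 0. *)
Lemma free_eq0_of_vanishing h0 h1 : free_i0 h0 -> free_i0 h1 ->
  (forall v, Dform.@[v] = 0 -> h0.@[v] + v i0 * h1.@[v] = 0) -> h0 = 0 /\ h1 = 0.
Proof.
move=> fh0 fh1 H.
have key v : in_box (box_lo k) (box_hi k) v -> h0.@[v] = 0 /\ h1.@[v] = 0.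
  move=> hv; have := sign_Dtail_on_box k_neq_i0 hv; rewrite s_k mulN1r opprK.
  set t := Dtail.@[v] => t_gt0.
  have root_eq x : x ^+ 2 = t -> h0.@[v] + x * h1.@[v] = 0.
    move=> hx; have := H (set_i0 v x).
    by rewrite meval_Dform set_i0_id free_i0_Dtail hx subrr fh0 fh1 => ->.
  have sqrt_gt0 : 0 < Num.sqrt t by rewrite sqrtr_gt0.
  have e1 := root_eq _ (sqr_sqrtr (ltW t_gt0)).
  have e2 : h0.@[v] + - Num.sqrt t * h1.@[v] = 0.
    by apply: root_eq; rewrite sqrrN sqr_sqrtr // ltW.
  have : Num.sqrt t * h1.@[v] = 0 by lra.
  move/eqP; rewrite mulf_eq0 (gt_eqF sqrt_gt0) /= => /eqP h1v; split=> //.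
  by move: e1; rewrite h1v mulr0 addr0.
by split; apply: (mpoly_eq0_on_box (box_lo_hi k)) => v /key [].
Qed.

Lemma Dform_real_radical : real_radical Dform.
Proof.
move=> f H; have [g [h0 [h1 [fh0 fh1 ef]]]] := Ddecomp_all f.
have [h0_0 h1_0] : h0 = 0 /\ h1 = 0.
  apply: free_eq0_of_vanishing => // v Dv.
  by have := H v Dv; rewrite ef !mevalD !mevalM Dv mul0r add0r mevalXU.
by exists g; rewrite ef h0_0 h1_0 mulr0 !addr0.
Qed.

(* Dtail < 0 on the box around the j-th axis, where a0^2 - Dtail a1^2 is then a
   sum of squares. *)
Lemma sqr_sub_Dtail_eq0 (a0 a1 : {mpoly R[n]}) :
  a0 ^+ 2 - Dtail * a1 ^+ 2 = 0 -> a0 = 0 /\ a1 = 0.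
Proof.
move=> e.
have key v : in_box (box_lo j) (box_hi j) v -> a0.@[v] = 0 /\ a1.@[v] = 0.
  move=> hv; have := sign_Dtail_on_box j_neq_i0 hv; rewrite s_j mul1r oppr_gt0 => t_lt0.
  have := congr1 (meval v) e; rewrite mevalB mevalXn mevalM mevalXn meval0 => ev.
  have s0 := sqr_ge0 a0.@[v]; have s1 := sqr_ge0 a1.@[v].
  have : a1.@[v] ^+ 2 = 0 by nra.
  move/eqP; rewrite sqrf_eq0 => /eqP a1v; split=> //.
  by apply/eqP; rewrite -sqrf_eq0; apply/eqP; move: ev; rewrite a1v; lra.
by split; apply: (mpoly_eq0_on_box (box_lo_hi j)) => v /key [].
Qed.

Lemma Dform_prime : principal_prime Dform.
Proof.
split.
  apply: (not_in_Qideal1 (v := fun _ => 0)).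
  rewrite meval_Dform meval_Dtail big1 => [|i _]; last by rewrite expr2 !mul0r mulr0.
  by rewrite expr2 mul0r oppr0 subr0.
move=> a b [g eab] na.
have [ga [a0 [a1 [fa0 fa1 ea]]]] := Ddecomp_all a.
have [gb [b0 [b1 [fb0 fb1 eb]]]] := Ddecomp_all b.
have [z0 z1] : a0 * b0 + Dtail * (a1 * b1) = 0 /\ a0 * b1 + a1 * b0 = 0.
  apply: free_eq0_of_vanishing => [v x|v x|v Dv].
  - by rewrite !(mevalD, mevalM) fa0 fb0 fa1 fb1 free_i0_Dtail.
  - by rewrite !(mevalD, mevalM) fa0 fb0 fa1 fb1.
  have hT : Dtail.@[v] = v i0 ^+ 2.
    by apply/esym/eqP; rewrite -subr_eq0 -meval_Dform Dv.
  have := congr1 (meval v) eab; rewrite !mevalM Dv mul0r ea eb.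
  by rewrite !mevalD !mevalM Dv !mul0r !add0r mevalXU hT => <-; ring.
have [[a0_0 a1_0]|[b0_0 b1_0]] : (a0 = 0 /\ a1 = 0) \/ (b0 = 0 /\ b1 = 0).
  have : b1 * (a0 ^+ 2 - Dtail * a1 ^+ 2) = 0.
    have -> : b1 * (a0 ^+ 2 - Dtail * a1 ^+ 2) =
      a0 * (a0 * b1 + a1 * b0) - a1 * (a0 * b0 + Dtail * (a1 * b1)) by ring.
    by rewrite z0 z1 !mulr0 subrr.
  move/eqP; rewrite mulf_eq0 => /orP[/eqP b1_0|/eqP/sqr_sub_Dtail_eq0]; last by left.
  move: z0 z1; rewrite b1_0 !mulr0 addr0 add0r.
  have [b0_0|b0_neq0] := eqVneq b0 0; first by right.
  by move=> /eqP + /eqP; rewrite !mulf_eq0 !(negbTE b0_neq0) !orbF => /eqP ? /eqP ?; left.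
  by case: na; exists ga; rewrite ea a0_0 a1_0 mulr0 !addr0.
by exists gb; rewrite eb b0_0 b1_0 mulr0 !addr0.
Qed.

Lemma Qpoly_diag : Qpoly (diag_mx (\row_i s i)) = Dform.
Proof.
apply: meval_inj => v; rewrite meval_Qpoly meval_Dform meval_Dtail opprK.
rewrite (eq_bigr (fun i => s i * v i ^+ 2)) => [|i _].
  by rewrite (bigD1 i0) //= s_i0 mul1r.
rewrite (bigD1 i) //= big1 ?addr0 => [|l /negbTE li].
  by rewrite !mxE eqxx mulr1n expr2.
by rewrite !mxE eq_sym li mulr0n mul0r.
Qed.

End DiagonalForm.

Lemma diagonalizable_Qpoly_prime (R : realType) n (A P : 'M[R]_n) (s : 'I_n -> R)
    (i0 j k : 'I_n) :
  P \in unitmx -> P^T *m A *m P = diag_mx (\row_i s i) ->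
  (forall i, s i = 1 \/ s i = -1) -> s i0 = 1 -> s j = 1 -> s k = -1 -> j != i0 ->
  real_radical (Qpoly A) /\ principal_prime (Qpoly A).
Proof.
move=> Pu hP ss si0 sj sk ji0.
have QD : Qpoly A \mPo lin P = Dform s i0 by rewrite Qpoly_comp_lin hP (Qpoly_diag si0).
split; [apply: (real_radical_comp_lin Pu) | apply: (principal_prime_comp_lin Pu)].
  by rewrite QD; exact: Dform_real_radical ss si0 sk.
by rewrite QD; exact: Dform_prime ss si0 sj sk ji0.
Qed.

Lemma signature_Qpoly_prime (R : realType) n (A : 'M[R]_n) p q :
  has_signature A p q -> (1 <= p)%N -> (1 <= q)%N -> (3 <= p + q)%N ->
  real_radical (Qpoly A) /\ principal_prime (Qpoly A).
Proof.
move=> [_ [pqn [P [Pu hP]]]] p1 q1 pq3.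
pose sg (c : R) (i : 'I_n) := if (i < p)%N then c else - c.
have sg_sign c : c = 1 \/ c = -1 -> forall i, sg c i = 1 \/ sg c i = -1.
  by move=> [->|->] i; rewrite /sg; case: ifP; rewrite ?opprK; auto.
have lt2n : (2 < n)%N by rewrite -pqn.
have lt1n := ltnW lt2n; have lt0n := ltnW lt1n.
have ltpn : (p < n)%N by rewrite -pqn -[X in (X < _)%N]addn0 ltn_add2l.
have [p_gt1|p_le1] := ltnP 1 p.
  apply: (diagonalizable_Qpoly_prime (s := sg 1) (i0 := Ordinal lt0n)
    (j := Ordinal lt1n) (k := Ordinal ltpn) Pu hP) => //.
  - by apply: sg_sign; left.
  - by rewrite /sg /= (leq_trans _ p1).
  - by rewrite /sg /= p_gt1.
  - by rewrite /sg /= ltnn.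
have p_eq1 : p = 1%N by apply/eqP; rewrite eqn_leq p_le1 p1.
have [] := @diagonalizable_Qpoly_prime _ _ (- A) P (sg (-1)) (Ordinal lt1n)
  (Ordinal lt2n) (Ordinal lt0n) Pu.
- rewrite mulmxN mulNmx hP -raddfN /=; congr diag_mx.
  by apply/matrixP => a b; rewrite !mxE /sg; case: ifP.
- by apply: sg_sign; right.
- by rewrite /sg /= p_eq1 ltnn opprK.
- by rewrite /sg /= p_eq1 opprK.
- by rewrite /sg /= p_eq1.
- by [].
by rewrite QpolyN => /real_radicalN ? /principal_primeN.
Qed.

Lemma ex_threshold (P : nat -> Prop) m :
  ~ P 0 -> P m -> exists k, [/\ (k < m)%N, ~ P k & P k.+1].
Proof.
move=> nP0; elim: m => [//|m IH] Pm.
have [/IH [k [km nPk Pk1]]|nPm] := classic (P m); last by exists m.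
by exists k; split=> //; exact: ltnW.
Qed.

Lemma ord_fun_not_surj k r (g : 'I_k -> 'I_r) :
  (k < r)%N -> exists j0, forall t, g t != j0.
Proof.
move=> lt_kr; case: (pickP [pred j | j \notin codom g]) => [j0 /= nj0|all_in].
  by exists j0 => t; apply: contraNneq nj0 => <-; exact: codom_f.
have : (r <= k)%N.
  rewrite -[r]card_ord -[k]card_ord -(size_codom g) (leq_trans _ (card_size _)) //.
  by apply/subset_leq_card/subsetP => j _; move: (all_in j) => /= /negbFE.
by rewrite leqNgt lt_kr.
Qed.

Definition prepend T k (x : T) (f : 'I_k -> T) : 'I_k.+1 -> T :=
  fun t => oapp f x (unlift ord0 t).

Lemma bordered_minor_expansion (K : comPzRingType) w r k (X : 'M[K]_(w, r))
    (f : 'I_k -> 'I_w) (g : 'I_k -> 'I_r) (j0 : 'I_r) :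
  (forall t, g t != j0) ->
  exists2 c : 'I_r -> K, c j0 = \det (mxsub f g X) &
    forall i, \sum_j c j * X i j = \det (mxsub (prepend i f) (prepend j0 g) X).
Proof.
move=> gj0.
pose C (t : 'I_k.+1) := (-1) ^+ (@ord0 k + t)%N *
  \det (\matrix_(a < k, b < k) X (f a) (prepend j0 g (lift t b))).
have cofE i t : cofactor (mxsub (prepend i f) (prepend j0 g) X) ord0 t = C t.
  rewrite /cofactor; congr (_ * \det _).
  by apply/matrixP => a b; rewrite !mxE /prepend liftK.
exists (fun j => \sum_(t | prepend j0 g t == j) C t).
  rewrite (big_pred1 ord0) => [|t].
    rewrite /C expr0 mul1r; congr (\det _); apply/matrixP => a b.
    by rewrite !mxE /prepend liftK.
  case: (unliftP ord0 t) => [t' ->|->]; rewrite /prepend ?unlift_none ?eqxx //.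
  by rewrite liftK /= (negbTE (gj0 t')) eq_sym (negbTE (neq_lift _ _)).
move=> i; rewrite (expand_det_row _ ord0).
under [RHS]eq_bigr do rewrite cofE mxE /prepend unlift_none.
rewrite (partition_big (prepend j0 g) predT) //=; apply: eq_bigr => j _.
by rewrite big_distrl /=; apply: eq_bigr => t /eqP <-; rewrite mulrC.
Qed.

Section MinorCriteria.
Variables (R : realType) (n w r : nat) (X : 'M[{mpoly R[n]}]_(w, r)).
Variable Q : {mpoly R[n]}.

Definition dependent_on_zeros := forall v : 'I_n -> R, Q.@[v] = 0 ->
  exists c : 'I_r -> R, (exists i, c i != 0) /\
    forall k : 'I_w, \sum_(i < r) c i * (X k i).@[v] = 0.

Definition minors_in_Qideal := forall f, in_minor_ideal X f -> in_Qideal Q f.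

Definition relation_mod_Q := exists c : 'I_r -> {mpoly R[n]},
  (exists i, ~ in_Qideal Q (c i)) /\
  exists y : 'I_w -> {mpoly R[n]}, forall k : 'I_w, \sum_(i < r) c i * X k i = Q * y k.

Lemma minors_in_QidealP :
  (forall s : {ffun 'I_r -> 'I_w}, injective s -> in_Qideal Q (\det (rowsub s X))) <->
  minors_in_Qideal.
Proof.
split=> [H f [a ->]|H s s_inj].
  apply: (big_ind (in_Qideal Q)); [exact: in_Qideal0|exact: in_QidealD|].
  by move=> s /injectiveP s_inj; apply/in_QidealMl/H.
apply: H; exists (fun s' => (s' == s)%:R); rewrite (bigD1 s) /=; last exact/injectiveP.
by rewrite eqxx mul1r big1 ?addr0 // => s' /andP[_ /negbTE ->]; rewrite mul0r.
Qed.

Lemma minors_in_Qideal_of_dependent :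
  real_radical Q -> dependent_on_zeros -> minors_in_Qideal.
Proof.
move=> rrQ dep; apply/minors_in_QidealP => s _; apply: rrQ => v /dep [c [[i ci] hc]].
rewrite -det_map_mx -det_tr; apply/eqP/det0P; exists (\row_j c j).
  by apply: contra ci => /eqP/matrixP/(_ 0 i); rewrite !mxE => ->.
apply/matrixP => a l; rewrite !mxE -[RHS](hc (s l)).
by apply: eq_bigr => m _; rewrite !mxE.
Qed.

Lemma dependent_of_minors_in_Qideal : minors_in_Qideal -> dependent_on_zeros.
Proof.
move/minors_in_QidealP => H v Qv; set Xv := map_mx (meval v) X.
have /matrix0Pn [i [j kij]] : kermx Xv^T != 0.
  rewrite kermx_eq0 /row_free mxrank_tr; apply/negP => rf.
  have [g eg] := H _ (fullrankfun_inj (rkA := rf)).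
  have := fullrowsub_unit rf; rewrite unitmxE unitfE.
  have -> : rowsub (fullrankfun rf) Xv = map_mx (meval v) (rowsub (fullrankfun rf) X).
    by apply/matrixP => a b; rewrite !mxE.
  by rewrite det_map_mx /= eg mevalM Qv mul0r eqxx.
exists (kermx Xv^T i); split; first by exists j.
move=> l; have := congr1 (fun M : 'M_(r, w) => M i l) (mulmx_ker Xv^T).
by rewrite !mxE => e; rewrite -[RHS]e; apply: eq_bigr => a _; rewrite !mxE.
Qed.

(* Multiplying the relation by the adjugate of a maximal minor M gives
   det M * c = Q * _. *)
Lemma minors_in_Qideal_of_relation :
  principal_prime Q -> relation_mod_Q -> minors_in_Qideal.
Proof.
move=> [_ prQ] [c [[i0 ci0] [y hy]]]; apply/minors_in_QidealP => s _.
set M := rowsub s X; apply: (prQ (c i0)) => //.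
have hM : M *m \col_i c i = Q *: \col_a y (s a).
  by apply/matrixP => a b; rewrite !mxE -hy; apply: eq_bigr => i _; rewrite !mxE mulrC.
have := congr1 (fun N : 'M_(r, 1) => N i0 0) (mulmxA (\adj M) M (\col_i c i)).
rewrite hM mul_adj_mx mul_scalar_mx -scalemxAr !mxE => e.
by exists (\sum_j \adj M i0 j * (\col_a y (s a)) j 0); rewrite mulrC e.
Qed.

Definition square_minors_in_Qideal k := forall (f : 'I_k -> 'I_w) (g : 'I_k -> 'I_r),
  in_Qideal Q (\det (mxsub f g X)).

Lemma square_minors_in_Qideal_r : minors_in_Qideal -> square_minors_in_Qideal r.
Proof.
move/minors_in_QidealP => H f g.
have [/injectiveP f_inj|/injectivePn [a [b ab fab]]] := boolP (injectiveb f); last first.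
  rewrite (determinant_alternate ab) => [|l]; first exact: in_Qideal0.
  by rewrite !mxE fab.
have [/injectiveP g_inj|/injectivePn [a [b ab gab]]] := boolP (injectiveb g); last first.
  rewrite -det_tr (determinant_alternate ab) => [|l]; first exact: in_Qideal0.
  by rewrite !mxE gab.
have ff_inj : injective (finfun f) by move=> a b; rewrite !ffunE => /f_inj.
have -> : mxsub f g X = col_perm (perm g_inj) (rowsub (finfun f) X).
  by apply/matrixP => a b; rewrite !mxE ffunE permE.
by rewrite col_permE det_mulmx mulrC; apply: in_QidealMl; exact: H ff_inj.
Qed.

(* Take a largest minor outside the ideal and expand the bordered minors along
   the new row. *)
Lemma relation_of_minors_in_Qideal :
  ~ in_Qideal Q 1 -> minors_in_Qideal -> relation_mod_Q.
Proof.
move=> Q1 H.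
have nP0 : ~ square_minors_in_Qideal 0.
  by move/(_ (ffun0 (card_ord 0)) (ffun0 (card_ord 0))); rewrite det_mx00.
have [k [lt_kr nPk Pk1]] := ex_threshold nP0 (square_minors_in_Qideal_r H).
have [f [g nfg]] : exists (f : 'I_k -> 'I_w) (g : 'I_k -> 'I_r),
    ~ in_Qideal Q (\det (mxsub f g X)).
  by apply: NNPP => hn; apply: nPk => f g; apply: NNPP => h; apply: hn; exists f, g.
have [j0 gj0] := ord_fun_not_surj g lt_kr.
have [c cj0 hc] := bordered_minor_expansion X f gj0.
exists c; split; first by exists j0; rewrite cj0.
have /fin_all_exists [y hy] : forall i, exists yi, \sum_j c j * X i j = Q * yi.
  by move=> i; rewrite hc; apply: Pk1.
by exists y.
Qed.

End MinorCriteria.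

Theorem lemma3p5 (R : realType) (n p q w r : nat) (A : 'M[R]_n)
  (X : 'M[{mpoly R[n]}]_(w, r)) :
  has_signature A p q -> (1 <= p)%N -> (1 <= q)%N -> (3 <= p + q)%N ->
  (r <= w)%N ->
  let Q := Qpoly A in
  [/\ ((forall v : 'I_n -> R, Q.@[v] = 0 ->
          exists c : 'I_r -> R, (exists i, c i != 0) /\
            forall k : 'I_w, \sum_(i < r) c i * (X k i).@[v] = 0)
       <-> (forall f, in_minor_ideal X f -> in_Qideal Q f)),
      ((forall f, in_minor_ideal X f -> in_Qideal Q f)
       <-> (exists c : 'I_r -> {mpoly R[n]},
              (exists i, ~ in_Qideal Q (c i)) /\
              exists y : 'I_w -> {mpoly R[n]},
                forall k : 'I_w, \sum_(i < r) c i * X k i = Q * y k))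
    & ((forall v : 'I_n -> R, Q.@[v] = 0 ->
          exists c : 'I_r -> R, (exists i, c i != 0) /\
            forall k : 'I_w, \sum_(i < r) c i * (X k i).@[v] = 0)
       <-> (exists c : 'I_r -> {mpoly R[n]},
              (exists i, ~ in_Qideal Q (c i)) /\
              exists y : 'I_w -> {mpoly R[n]},
                forall k : 'I_w, \sum_(i < r) c i * X k i = Q * y k))].
Proof.
move=> hs p1 q1 pq3 _ Q.
have [rrQ prQ] := signature_Qpoly_prime hs p1 q1 pq3.
have h12 := minors_in_Qideal_of_dependent (X := X) rrQ.
have h21 := dependent_of_minors_in_Qideal (X := X) (Q := Q).
have h23 := relation_of_minors_in_Qideal (X := X) prQ.1.
have h32 := minors_in_Qideal_of_relation (X := X) prQ.
split; split.
- exact: h12.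
- exact: h21.
- exact: h23.
- exact: h32.
- by move/h12/h23.
- by move/h32/h21.
Qed.
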